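(* Let $a\in\mathcal{T}_n\setminus\mathcal{S}_n$ and $G\le\mathcal{S}_n$. The following are equivalent: (1) $\langle a,G\rangle\setminus G=\langle a,\mathcal{S}_n\rangle\setminus\mathcal{S}_n$; (2) $\{b\in\langle a,G\rangle:\operatorname{rank}(b)=\operatorname{rank}(a)\}=\{b\in\langle a,\mathcal{S}_n\rangle:\operatorname{rank}(b)=\operatorname{rank}(a)\}$.
   Context: $\Omega=\{1,\ldots,n\}$, $\mathcal{T}_n$ is the monoid of all maps $\Omega\to\Omega$, $\mathcal{S}_n$ the symmetric group, $\langle\cdot\rangle$ denotes the generated semigroup, and $\operatorname{rank}(b)=|\Omega b|$. *)

From mathcomp Require Import all_boot all_fingroup.
Set Implicit Arguments. Unset Strict Implicit. Unset Printing Implicit Defensive.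

(* Omega = {1..n} is modelled by 'I_n; T_n = {ffun 'I_n -> 'I_n}. *)
Definition trans (n : nat) := {ffun 'I_n -> 'I_n}.

(* composition in the paper's right-action convention: x (a b) = (x a) b *)
Definition tmul n (a b : trans n) : trans n := [ffun x => b (a x)].

Definition permf n (g : {perm 'I_n}) : trans n := [ffun x => g x].

Definition inPerms n (G : {set {perm 'I_n}}) (b : trans n) : Prop :=
  exists2 g, g \in G & b = permf g.

Inductive gen n (a : trans n) (G : {set {perm 'I_n}}) : trans n -> Prop :=
| gen_a : gen a G a
| gen_perm g : g \in G -> gen a G (permf g)
| gen_mul b c : gen a G b -> gen a G c -> gen a G (tmul b c).

Definition rank n (b : trans n) : nat := #|[set b x | x in 'I_n]|.

From mathcomp Require Import all_boot all_fingroup.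
Set Implicit Arguments. Unset Strict Implicit. Unset Printing Implicit Defensive.
Import GroupScope.

(* Since a is not a permutation, rank a < n, and every element of <a, G>
   is either in G or has rank at most rank a.  So elements of rank exactly
   rank a are never permutations, which gives (1) => (2).  Conversely, the
   sandwiches g a h with g, h in S_n have the rank of a, so (2) puts them in
   <a, G>; a non-permutation of <a, S_n> is a product in which the
   permutations can be absorbed into such sandwiches, so it lies in <a, G>. *)

Section Transformations.
Variable n : nat.
Implicit Types (a b c : trans n) (g h : {perm 'I_n}) (X Y : {set {perm 'I_n}}).

Lemma tmulA a b c : tmul (tmul a b) c = tmul a (tmul b c).
Proof. by apply/ffunP => x; rewrite !ffunE. Qed.

Lemma permfM g h : tmul (permf g) (permf h) = permf (g * h).
Proof. by apply/ffunP => x; rewrite !ffunE permM. Qed.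

Lemma tmul1f b : tmul (permf 1) b = b.
Proof. by apply/ffunP => x; rewrite !ffunE perm1. Qed.

Lemma tmulf1 b : tmul b (permf 1) = b.
Proof. by apply/ffunP => x; rewrite !ffunE perm1. Qed.

Lemma inPerms_subset X Y b : X \subset Y -> inPerms X b -> inPerms Y b.
Proof. by move=> sXY [g Xg ->]; exists g => //; apply: (subsetP sXY). Qed.

Lemma imset_tmul b c :
  [set tmul b c x | x in 'I_n] = [set c y | y in [set b x | x in 'I_n]].
Proof. by rewrite -imset_comp; apply: eq_imset => x; rewrite ffunE. Qed.

Lemma rank_tmul_l b c : rank (tmul b c) <= rank b.
Proof. by rewrite /rank imset_tmul leq_imset_card. Qed.

Lemma rank_tmul_r b c : rank (tmul b c) <= rank c.
Proof.
rewrite /rank imset_tmul subset_leq_card //.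
by apply/subsetP => _ /imsetP[y _ ->]; apply: imset_f.
Qed.

Lemma rank_tmul_permf b h : rank (tmul b (permf h)) = rank b.
Proof.
rewrite /rank imset_tmul (@eq_imset _ _ _ h) => [|y]; last by rewrite ffunE.
by rewrite card_imset //; apply: perm_inj.
Qed.

Lemma rank_permf_tmul g b : rank (tmul (permf g) b) = rank b.
Proof.
apply/eqP; rewrite eqn_leq rank_tmul_r.
by rewrite -{1}[b]tmul1f -(mulVg g) -permfM tmulA rank_tmul_r.
Qed.

Lemma rank_permf g : rank (permf g) = n.
Proof.
rewrite /rank (@eq_imset _ _ _ g) => [|x]; last by rewrite ffunE.
by rewrite card_imset ?card_ord //; apply: perm_inj.
Qed.

Lemma rank_le_dim b : rank b <= n.
Proof. by rewrite /rank (leq_trans (leq_imset_card _ _)) ?card_ord. Qed.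

Lemma rank_inPerms X b : inPerms X b -> rank b = n.
Proof. by case=> g _ ->; apply: rank_permf. Qed.

Lemma rank_eq_inPerms b : rank b = n -> inPerms [set: {perm 'I_n}] b.
Proof.
move=> rank_b; have b_inj : injective b.
  have /imset_injP b_inj : #|[set b x | x in 'I_n]| == #|'I_n|.
    by rewrite card_ord; apply/eqP.
  by move=> x y; apply: b_inj.
by exists (perm b_inj); rewrite ?inE //; apply/ffunP => x; rewrite ffunE permE.
Qed.

Lemma rank_lt_notin_perms X b : rank b < n -> ~ inPerms X b.
Proof. by move=> rank_b /rank_inPerms rank_n; rewrite rank_n ltnn in rank_b. Qed.

End Transformations.

Section Generated.
Variables (n : nat) (a : trans n).
Implicit Types (b : trans n) (g h : {perm 'I_n}) (X Y : {set {perm 'I_n}}).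

Lemma gen_subset X Y b : X \subset Y -> gen a X b -> gen a Y b.
Proof.
move=> sXY; elim=> [|g Xg|c d _ gen_c _ gen_d]; first exact: gen_a.
  by apply: gen_perm; apply: (subsetP sXY).
exact: gen_mul.
Qed.

Lemma gen_inPerms_or_rank_le (G : {group {perm 'I_n}}) b :
  gen a G b -> inPerms G b \/ rank b <= rank a.
Proof.
elim=> [|g Gg|c d _ [[g Gg ->]|rank_c] _ [[h Gh ->]|rank_d]].
- by right.
- by left; exists g.
- by left; exists (g * h); [apply: groupM | apply: permfM].
- by right; apply: leq_trans (rank_tmul_r _ _) rank_d.
- by right; apply: leq_trans (rank_tmul_l _ _) rank_c.
- by right; apply: leq_trans (rank_tmul_l _ _) rank_c.
Qed.

Definition sandwiches_in X b : Prop :=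
  forall g h, gen a X (tmul (tmul (permf g) b) (permf h)).

Lemma gen_inPerms_or_sandwiches_in X b :
  sandwiches_in X a -> gen a [set: {perm 'I_n}] b ->
  inPerms [set: {perm 'I_n}] b \/ sandwiches_in X b.
Proof.
move=> sw_a; elim=> [|g _|c d _ [[g _ ->]|sw_c] _ [[h _ ->]|sw_d]].
- by right.
- by left; exists g; rewrite ?inE.
- by left; exists (g * h); rewrite ?inE ?permfM.
- by right=> g' h'; rewrite -tmulA permfM; apply: sw_d.
- by right=> g' h'; rewrite !tmulA permfM -!tmulA; apply: sw_c.
- right=> g h.
  have -> : tmul (tmul (permf g) (tmul c d)) (permf h)
      = tmul (tmul (tmul (permf g) c) (permf 1)) (tmul (tmul (permf 1) d) (permf h)).
    by rewrite tmulf1 tmul1f !tmulA.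
  by apply: gen_mul; [apply: sw_c | apply: sw_d].
Qed.

Hypothesis a_notin_perms : ~ inPerms [set: {perm 'I_n}] a.

Lemma rank_lt_dim : rank a < n.
Proof.
rewrite ltn_neqAle rank_le_dim andbT.
by apply/eqP => /rank_eq_inPerms.
Qed.

Lemma rank_le_notin_perms X b : rank b <= rank a -> ~ inPerms X b.
Proof. by move=> rank_b; apply/rank_lt_notin_perms/(leq_ltn_trans rank_b rank_lt_dim). Qed.

Lemma eq_nonperms_eq_rank (G : {group {perm 'I_n}}) :
  (forall b, (gen a G b /\ ~ inPerms G b) <->
             (gen a [set: {perm 'I_n}] b /\ ~ inPerms [set: {perm 'I_n}] b)) ->
  (forall b, (gen a G b /\ rank b = rank a) <->
             (gen a [set: {perm 'I_n}] b /\ rank b = rank a)).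
Proof.
move=> eq_nonperms b.
have notperm_b X : rank b = rank a -> ~ inPerms X b.
  by move=> rank_b; apply: rank_le_notin_perms; rewrite rank_b.
split=> [[gen_b rank_b]|[gen_b rank_b]]; split=> //.
  by have [] := (eq_nonperms b).1 (conj gen_b (notperm_b _ rank_b)).
by have [] := (eq_nonperms b).2 (conj gen_b (notperm_b _ rank_b)).
Qed.

Lemma eq_rank_eq_nonperms (G : {group {perm 'I_n}}) :
  (forall b, (gen a G b /\ rank b = rank a) <->
             (gen a [set: {perm 'I_n}] b /\ rank b = rank a)) ->
  (forall b, (gen a G b /\ ~ inPerms G b) <->
             (gen a [set: {perm 'I_n}] b /\ ~ inPerms [set: {perm 'I_n}] b)).
Proof.
move=> eq_rank b; split=> [[gen_b notperm_b]|[gen_b notperm_b]].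
  split; first exact: gen_subset (subsetT _) gen_b.
  by case: (gen_inPerms_or_rank_le gen_b) => // /rank_le_notin_perms.
have sw_a : sandwiches_in G a.
  move=> g h; apply: (proj1 ((eq_rank _).2 _)); split.
    by apply: gen_mul; [apply: gen_mul|]; constructor; rewrite ?inE.
  by rewrite rank_tmul_permf rank_permf_tmul.
case: (gen_inPerms_or_sandwiches_in sw_a gen_b) => // sw_b.
split; first by have := sw_b 1 1; rewrite tmul1f tmulf1.
by apply: contra_not notperm_b; apply: inPerms_subset (subsetT _).
Qed.

End Generated.

Theorem lemma8p2 (n : nat) (a : trans n) (G : {group {perm 'I_n}}) :
  ~ inPerms [set: {perm 'I_n}] a ->
  ((forall b : trans n,
      (gen a G b /\ ~ inPerms G b) <->
      (gen a [set: {perm 'I_n}] b /\ ~ inPerms [set: {perm 'I_n}] b))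
   <->
   (forall b : trans n,
      (gen a G b /\ rank b = rank a) <->
      (gen a [set: {perm 'I_n}] b /\ rank b = rank a))).
Proof.
move=> a_notin_perms.
by split; [apply: eq_nonperms_eq_rank | apply: eq_rank_eq_nonperms].
Qed.
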